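(* Let $(X,d)$ be a compact metric space and let $f:X\to X$ be an arbitrary map (no continuity assumed). If $(C_k)_{k\in\mathbb{N}}$ is a sequence of chain components in $\mathfrak{C}_f$ such that $C_{k+1}\prec C_k$ for every $k$, then there is a chain component $C\in\mathfrak{C}_f$ with $C\prec C_k$ for every $k\in\mathbb{N}$.
   Context: For a metric space $(X,d)$ and map $f:X\to X$: an $\varepsilon$-chain from $x$ to $y$ is a finite sequence $x_0=x,\dots,x_n=y$, $n\ge1$, with $d(f(x_i),x_{i+1})<\varepsilon$; $x\,\mathcal{C}\,y$ iff for every $\varepsilon>0$ there is an $\varepsilon$-chain from $x$ to $y$; $CR_f=\{x:x\,\mathcal{C}\,x\}$; $x\,E\,y$ iff $x\,\mathcal{C}\,y$ and $y\,\mathcal{C}\,x$; $\mathfrak{C}_f=CR_f/E$ is the set of chain components, partially ordered by $[x]\preceq[y]$ iff $y\,\mathcal{C}\,x$; $\prec$ denotes $\preceq$ together with $\neq$. *)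

From Stdlib Require Import Reals List.
Open Scope R_scope.

Definition is_metric {X : Type} (d : X -> X -> R) : Prop :=
  (forall x y, 0 <= d x y) /\
  (forall x y, d x y = 0 <-> x = y) /\
  (forall x y, d x y = d y x) /\
  (forall x y z, d x z <= d x y + d y z).

Definition metric_open {X : Type} (d : X -> X -> R) (U : X -> Prop) : Prop :=
  forall x, U x -> exists r, 0 < r /\ forall y, d x y < r -> U y.

Definition metric_compact {X : Type} (d : X -> X -> R) : Prop :=
  forall (I : Type) (U : I -> X -> Prop),
    (forall i, metric_open d (U i)) ->
    (forall x, exists i, U i x) ->
    exists l : list I, forall x, exists i, In i l /\ U i x.

Definition eps_chain {X : Type} (d : X -> X -> R) (f : X -> X)
    (eps : R) (x y : X) : Prop :=
  exists (n : nat) (s : nat -> X),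
    (1 <= n)%nat /\ s 0%nat = x /\ s n = y /\
    forall i, (i < n)%nat -> d (f (s i)) (s (S i)) < eps.

Definition chain_rel {X : Type} (d : X -> X -> R) (f : X -> X) (x y : X) : Prop :=
  forall eps, 0 < eps -> eps_chain d f eps x y.

Definition chain_recurrent {X : Type} (d : X -> X -> R) (f : X -> X) (x : X) : Prop :=
  chain_rel d f x x.

Definition chain_equiv {X : Type} (d : X -> X -> R) (f : X -> X) (x y : X) : Prop :=
  chain_rel d f x y /\ chain_rel d f y x.

Definition chain_component {X : Type} (d : X -> X -> R) (f : X -> X)
    (C : X -> Prop) : Prop :=
  exists x, chain_recurrent d f x /\
    forall y, C y <-> (chain_recurrent d f y /\ chain_equiv d f x y).

(* [x] <= [y] iff y C x (stated on representatives). *)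
Definition comp_le {X : Type} (d : X -> X -> R) (f : X -> X)
    (C D : X -> Prop) : Prop :=
  exists x y, C x /\ D y /\ chain_rel d f y x.

Definition comp_lt {X : Type} (d : X -> X -> R) (f : X -> X)
    (C D : X -> Prop) : Prop :=
  comp_le d f C D /\ C <> D.

(* Take representatives a_k of the C_k; then a_0 C a_1 C a_2 C ...  By compactness the closed
   sets {w | a_k C w} have a common point p, and p chains to a chain recurrent point z: take a
   greedy sequence of chains from p which, whenever possible, moves to a point whose whole chain
   future avoids the j-th set of a countable base; for a common chain successor y of that
   sequence, z = f y reaches everything y reaches, in particular f y.  The component of z lies
   below every C_k, strictly, since z C a_k would force a_k E a_(k+1), i.e. C_k = C_(k+1). *)

From Stdlib Require Import Reals Lra Lia List Classical ClassicalEpsilon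
  FunctionalExtensionality PropExtensionality.
From Stdlib Require Cantor.
Open Scope R_scope.

Section ChainRelation.

Context {X : Type} (d : X -> X -> R) (f : X -> X).
Hypothesis Hd : is_metric d.

Local Notation "x ~> y" := (chain_rel d f x y) (at level 70).

Lemma chain_rel_step x : x ~> f x.
Proof.
  destruct Hd as [_ [Hd0 _]]. intros e He.
  exists 1%nat, (fun i => if Nat.eqb i 0 then x else f x).
  repeat split; auto. intros i Hi. replace i with 0%nat by lia. simpl.
  assert (d (f x) (f x) = 0) by (apply Hd0; reflexivity). lra.
Qed.

Lemma chain_rel_trans x y z : x ~> y -> y ~> z -> x ~> z.
Proof.
  intros Hxy Hyz e He.
  destruct (Hxy e He) as [n1 [s1 [Hn1 [Hs10 [Hs1n Hs1]]]]].
  destruct (Hyz e He) as [n2 [s2 [Hn2 [Hs20 [Hs2n Hs2]]]]].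
  exists (n1 + n2)%nat, (fun i => if Nat.leb i n1 then s1 i else s2 (i - n1)%nat).
  split; [lia|]. split; [simpl; exact Hs10|]. split.
  - destruct (Nat.leb_spec (n1 + n2) n1); [lia|].
    replace (n1 + n2 - n1)%nat with n2 by lia. exact Hs2n.
  - intros i Hi. destruct (Nat.leb_spec i n1), (Nat.leb_spec (S i) n1).
    + apply Hs1; lia.
    + replace i with n1 by lia. replace (S n1 - n1)%nat with 1%nat by lia.
      rewrite Hs1n, <- Hs20. apply Hs2; lia.
    + lia.
    + replace (S i - n1)%nat with (S (i - n1)) by lia. apply Hs2; lia.
Qed.

Lemma chain_rel_closed y w :
  (forall r, 0 < r -> exists w', d w w' < r /\ y ~> w') -> y ~> w.
Proof.
  destruct Hd as [_ [_ [Hsym Htri]]].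
  intros Happrox e He. destruct (Happrox (e / 2)) as [w' [Hww' Hyw']]; [lra|].
  destruct (Hyw' (e / 2)) as [n [s [Hn [Hs0 [Hsn Hs]]]]]; [lra|].
  exists n, (fun i => if Nat.eqb i n then w else s i).
  split; [exact Hn|]. split; [destruct (Nat.eqb_spec 0 n); [lia | exact Hs0]|].
  split; [rewrite Nat.eqb_refl; reflexivity|].
  intros i Hi. destruct (Nat.eqb_spec i n); [lia|]. specialize (Hs i Hi).
  destruct (Nat.eqb_spec (S i) n) as [Hlast|]; [|lra].
  rewrite Hlast, Hsn in Hs. specialize (Htri (f (s i)) w' w).
  rewrite (Hsym w' w) in Htri. lra.
Qed.

Lemma chain_rel_compl_open y : metric_open d (fun w => ~ y ~> w).
Proof.
  intros w Hw. apply NNPP. intro Hnot. apply Hw, chain_rel_closed.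
  intros r Hr. apply NNPP. intro Hfar. apply Hnot. exists r. split; [exact Hr|].
  intros w' Hww' Hyw'. apply Hfar. exists w'. auto.
Qed.

Lemma greedy_chain_seq (x0 : X) (Q : nat -> X -> Prop) :
  exists xs : nat -> X, xs 0%nat = x0 /\ forall j, xs j ~> xs (S j) /\
    ((exists z, xs j ~> z /\ Q j z) -> Q j (xs (S j))).
Proof.
  assert (Hstep : forall xj : X * nat, exists z, fst xj ~> z /\
            ((exists z', fst xj ~> z' /\ Q (snd xj) z') -> Q (snd xj) z)).
  { intros [x j]. simpl.
    destruct (classic (exists z', x ~> z' /\ Q j z')) as [[z' Hz']|Hnone].
    - exists z'. tauto.
    - exists (f x). split; [apply chain_rel_step | contradiction]. }
  destruct (choice _ Hstep) as [step Hstep_spec].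
  exists (fix xs j := match j with O => x0 | S j => step (xs j, j) end).
  split; [reflexivity|]. intro j. exact (Hstep_spec (_, j)).
Qed.

Hypothesis Hcpt : metric_compact d.

Lemma chain_rel_common_successor (a : nat -> X) :
  (forall k, a k ~> a (S k)) -> exists p, forall k, a k ~> p.
Proof.
  intros Hadv.
  assert (Hmono : forall i J, (i <= J)%nat -> forall w, a J ~> w -> a i ~> w).
  { intros i J HiJ. induction HiJ as [|J _ IH]; [auto|].
    intros w Hw. apply IH. exact (chain_rel_trans _ _ _ (Hadv J) Hw). }
  apply NNPP. intro Hnone.
  destruct (Hcpt nat (fun k w => ~ a k ~> w)) as [l Hl].
  - intro k. apply chain_rel_compl_open.
  - intro w. apply NNPP. intro Hall. apply Hnone. exists w. intro k.
    apply NNPP. intro Hk. apply Hall. exists k. exact Hk.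
  - destruct (Hl (f (a (list_max l)))) as [i [Hi Hnot]]. apply Hnot.
    apply (Hmono i (list_max l)); [|apply chain_rel_step].
    exact (proj1 (Forall_forall _ l) (proj1 (list_max_le l _) (Nat.le_refl _)) i Hi).
Qed.

Lemma compact_finite_net e : 0 < e ->
  exists l : list X, forall x, exists q, In q l /\ d q x < e.
Proof.
  destruct Hd as [_ [Hd0 [_ Htri]]]. intros He.
  destruct (Hcpt X (fun q x => d q x < e)) as [l Hl].
  - intros q x Hx. exists (e - d q x). split; [lra|].
    intros y Hy. specialize (Htri q x y). lra.
  - intro x. exists x. assert (d x x = 0) by (apply Hd0; reflexivity). lra.
  - exists l. exact Hl.
Qed.

Lemma compact_countable_base : exists B : nat -> X -> Prop,
  forall p r, 0 < r -> exists j, B j p /\ forall w, B j w -> d p w < r.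
Proof.
  destruct Hd as [_ [_ [Hsym Htri]]].
  destruct (choice (fun n l => forall x, exists q, In q l /\ d q x < / INR (S n)))
    as [net Hnet].
  { intro n. apply compact_finite_net, Rinv_0_lt_compat, lt_0_INR. lia. }
  exists (fun j w => let (n, i) := Cantor.of_nat j in
          exists q, nth_error (net n) i = Some q /\ d q w < / INR (S n)).
  intros p r Hr. destruct (archimed_cor1 (r / 2)) as [[|n] [Hn Hn0]]; [lra|lia|].
  destruct (Hnet n p) as [q [Hq Hqp]]. destruct (In_nth_error _ _ Hq) as [i Hi].
  exists (Cantor.to_nat (n, i)). rewrite Cantor.cancel_of_to. split.
  - exists q. auto.
  - intros w [q' [Hq' Hq'w]]. rewrite Hi in Hq'. injection Hq' as <-.
    specialize (Htri p q w). rewrite (Hsym p q) in Htri. lra.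
Qed.

Lemma chain_recurrent_successor x0 : exists z, x0 ~> z /\ chain_recurrent d f z.
Proof.
  destruct compact_countable_base as [B HB].
  set (avoids := fun j z => forall w, z ~> w -> ~ B j w).
  destruct (greedy_chain_seq x0 avoids) as [xs [Hxs0 Hxs]].
  destruct (chain_rel_common_successor xs (fun j => proj1 (Hxs j))) as [y Hy].
  (* If f y did not reach some p that y reaches, a base set around p would be avoided by the
     future of f y, hence (greedily) by that of some xs, which nevertheless reaches p via y. *)
  assert (Hfy : forall p, y ~> p -> f y ~> p).
  { intros p Hyp. apply NNPP. intro Hnot.
    destruct (chain_rel_compl_open (f y) p Hnot) as [r [Hr Hball]].
    destruct (HB p r Hr) as [j [Hjp Hj]].
    assert (Havoid : avoids j (xs (S j))).
    { apply (proj2 (Hxs j)). exists (f y). split.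
      - exact (chain_rel_trans _ _ _ (Hy j) (chain_rel_step y)).
      - intros w Hw Hjw. exact (Hball w (Hj w Hjw) Hw). }
    exact (Havoid p (chain_rel_trans _ _ _ (Hy (S j)) Hyp) Hjp). }
  exists (f y). split.
  - rewrite <- Hxs0. exact (chain_rel_trans _ _ _ (Hy 0%nat) (chain_rel_step y)).
  - exact (Hfy _ (chain_rel_step y)).
Qed.

End ChainRelation.

Definition chain_class {X : Type} (d : X -> X -> R) (f : X -> X) (z : X) : X -> Prop :=
  fun w => chain_recurrent d f w /\ chain_equiv d f z w.

Section ChainComponents.

Context {X : Type} (d : X -> X -> R) (f : X -> X).

Local Notation "x ~> y" := (chain_rel d f x y) (at level 70).

Lemma chain_class_component z : chain_recurrent d f z -> chain_component d f (chain_class d f z).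
Proof. intros Hz. exists z. split; [exact Hz | reflexivity]. Qed.

Lemma chain_componentP C : chain_component d f C ->
  exists a, chain_recurrent d f a /\ C = chain_class d f a.
Proof.
  intros [a [Ha HC]]. exists a. split; [exact Ha|].
  apply functional_extensionality. intro w. apply propositional_extensionality. apply HC.
Qed.

Lemma chain_class_self z : chain_recurrent d f z -> chain_class d f z z.
Proof. intros Hz. split; [exact Hz | split; exact Hz]. Qed.

Lemma chain_class_eq a b : a ~> b -> b ~> a -> chain_class d f a = chain_class d f b.
Proof.
  intros Hab Hba. apply functional_extensionality. intro w.
  apply propositional_extensionality. unfold chain_class, chain_equiv.
  split; intros [Hw [Hto Hfrom]]; repeat split; try exact Hw; eapply chain_rel_trans; eauto.
Qed.

Lemma comp_le_chain_class a b : chain_recurrent d f a -> chain_recurrent d f b ->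
  comp_le d f (chain_class d f a) (chain_class d f b) <-> b ~> a.
Proof.
  intros Ha Hb. split.
  - intros [x [y [[_ [_ Hxa]] [[_ [Hby _]] Hyx]]]].
    eapply chain_rel_trans; [exact Hby|]. eapply chain_rel_trans; eauto.
  - intros Hba. exists a, b. repeat split; auto using chain_class_self.
Qed.

End ChainComponents.

Theorem theorem3p6 (X : Type) (d : X -> X -> R) (f : X -> X)
  (Hd : is_metric d) (Hcpt : metric_compact d)
  (Cs : nat -> X -> Prop)
  (HCs : forall k, chain_component d f (Cs k))
  (Hdec : forall k, comp_lt d f (Cs (S k)) (Cs k)) :
  exists C, chain_component d f C /\ forall k, comp_lt d f C (Cs k).
Proof.
  destruct (choice (fun k a => chain_recurrent d f a /\ Cs k = chain_class d f a)
              (fun k => chain_componentP d f (Cs k) (HCs k))) as [a Ha].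
  assert (Hadv : forall k, chain_rel d f (a k) (a (S k))).
  { intro k. destruct (Hdec k) as [Hle _], (Ha k) as [Hak HCk], (Ha (S k)) as [HaSk HCSk].
    rewrite HCk, HCSk in Hle. revert Hle. apply comp_le_chain_class; assumption. }
  destruct (chain_rel_common_successor d f Hd Hcpt a Hadv) as [p Hp].
  destruct (chain_recurrent_successor d f Hd Hcpt p) as [z [Hpz Hz]].
  assert (Haz : forall k, chain_rel d f (a k) z) by eauto using chain_rel_trans.
  exists (chain_class d f z). split; [exact (chain_class_component d f z Hz)|].
  intro k. destruct (Ha k) as [Hak HCk]. split.
  - rewrite HCk. apply comp_le_chain_class; auto.
  - intro Heq. apply (proj2 (Hdec k)). rewrite HCk, (proj2 (Ha (S k))).
    assert (Hza : chain_rel d f z (a k)).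
    { pose proof (chain_class_self d f z Hz) as Hzz.
      rewrite Heq, HCk in Hzz. exact (proj2 (proj2 Hzz)). }
    apply chain_class_eq; eauto using chain_rel_trans.
Qed.
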